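(* Let $n\ge 3$, let $m_1,m_2$ be positive integers with $m_1\mid m_2$, and let $F,R$ be as in the context. In $F/[R,F]$ the order of each of the following elements divides the stated number: (1) for $1\le i\le n-1$: $[s_i(1),s_i(x)]$ — $m_1$; (2) for $1\le i<j-1\le n-2$: $[s_i(1),s_j(1)]$ — $m_2$; $[s_i(x),s_j(x)][s_i(1),s_j(1)]^{-1}$ — $m_1$; $[s_i(x),s_j(1)][s_i(x),s_j(x)]^{-1}$ — $m_1$; $[s_i(1),s_j(x)][s_i(x),s_j(x)]^{-1}$ — $m_1$; (3) for $1\le i\le n-2$: $[s_i(1),s_{i+1}(x)][s_i(x),s_{i+1}(1)]^{-1}$ — $m_1$; $[s_i(x),s_{i+1}(x)][s_i(x),s_{i+1}(1)]^{-1}$ — $m_1$; (4) for $1\le i\le n-2$: $[s_i(1),s_{i+1}(1),s_i(1)]$ — $m_2$; $[s_i(1),s_{i+1}(1),s_{i+1}(1)s_i(1)^{-1}]$ — $\gcd(m_2,\binom{m_2}{2})$; $[s_i(1),s_{i+1}(1),s_i(x)s_i(1)^{-1}]$ — $m_1$; $[s_i(1),s_{i+1}(1),s_i(x)s_{i+1}(x)^{-1}(s_i(1)s_{i+1}(1)^{-1})^{-1}]$ — $\gcd(m_1,\binom{m_1}{2})$; (5) for $1\le i\le n-3$: $[s_i(1),s_{i+1}(1),s_{i+2}(1),s_{i+1}(1)]$ — $\gcd(2,m_2)$; $[s_i(1),s_{i+1}(1),s_{i+2}(1),s_{i+1}(x)s_{i+1}(1)^{-1}]$ — $\gcd(2,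m_1)$.
   Context: Commutator conventions: $[a,b]=a^{-1}b^{-1}ab$, $a^b=b^{-1}ab$, commutators left-normed: $[a_1,\dots,a_k]=[[a_1,\dots,a_{k-1}],a_k]$. Let $F$ be the free group on the $2(n-1)$ symbols $s_i(1),s_i(x)$, $1\le i\le n-1$. Write $s_i(1|x)$ for either of $s_i(1),s_i(x)$ (every choice is included). Let $R$ be the normal closure in $F$ of: $s_i(1)^{m_1}s_i(x)^{-m_1}$ and $s_i(x)^{m_2}$ ($1\le i\le n-1$); $[s_i(1),s_i(x)]$ ($1\le i\le n-1$); $[s_i(1|x),s_j(1|x)]$ ($1\le i<j-1\le n-2$); $[s_i(1|x)^{-1},s_{i+1}(x)^{-1}][s_i(x),s_{i+1}(1)]^{-1}$ ($1\le i\le n-2$); $[s_i(1|x),s_{i+1}(1),s_i(1)]$ and $[s_i(1|x),s_{i+1}(1),s_{i+1}(1)]$ ($1\le i\le n-2$); $[[s_i(1|x),s_{i+1}(1)],[s_{i+1}(1|x),s_{i+2}(1)]]$ ($1\le i\le n-3$). It is known that $F/R\cong\mathrm{UT}_n(\mathbb Z/m_1\mathbb Z\times\mathbb Z/m_2\mathbb Z)$ via $s_i(\lambda)\mapsto I+\lambda E_{i,i+1}$, where $1=(1,1)$ and $x=(0,1)$. *)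

(* Free groups are not in MathComp, so we build
   the free group on a set of symbols as words modulo free reduction, and
   subgroups (normal closure, [R,F]) as inductively generated sets of words
   closed under free equivalence. *)
From mathcomp Require Import all_boot.
Set Implicit Arguments. Unset Strict Implicit. Unset Printing Implicit Defensive.

(* A letter is a symbol with an inversion flag (true = inverse). *)
Definition word (X : Type) := seq (X * bool).

Definition wone {X : Type} : word X := [::].
Definition wmul {X : Type} (u v : word X) : word X := u ++ v.
Definition flipl {X : Type} (l : X * bool) : X * bool := (l.1, ~~ l.2).
Definition winv {X : Type} (u : word X) : word X := rev (map flipl u).
Definition wpow {X : Type} (u : word X) (k : nat) : word X := flatten (nseq k u).
Definition wcomm {X : Type} (a b : word X) : word X :=
  wmul (wmul (wmul (winv a) (winv b)) a) b.

Inductive red1 {X : Type} : word X -> word X -> Prop :=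
| red1_step (u v : word X) (l : X * bool) : red1 (u ++ [:: l; flipl l] ++ v) (u ++ v).

Inductive feq {X : Type} : word X -> word X -> Prop :=
| feq_refl u : feq u u
| feq_step u v : red1 u v -> feq u v
| feq_sym u v : feq u v -> feq v u
| feq_trans u v w : feq u v -> feq v w -> feq u w.

Inductive ncl {X : Type} (S : word X -> Prop) : word X -> Prop :=
| ncl_one : ncl S wone
| ncl_conj r g : S r -> ncl S (wmul (wmul (winv g) r) g)
| ncl_mul a b : ncl S a -> ncl S b -> ncl S (wmul a b)
| ncl_inv a : ncl S a -> ncl S (winv a)
| ncl_feq a b : feq a b -> ncl S a -> ncl S b.

Inductive gsub {X : Type} (S : word X -> Prop) : word X -> Prop :=
| gsub_one : gsub S wone
| gsub_base a : S a -> gsub S a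
| gsub_mul a b : gsub S a -> gsub S b -> gsub S (wmul a b)
| gsub_inv a : gsub S a -> gsub S (winv a)
| gsub_feq a b : feq a b -> gsub S a -> gsub S b.

Definition commRF {X : Type} (N : word X -> Prop) : word X -> Prop :=
  gsub (fun w => exists r f, N r /\ w = wcomm r f).

Unset Implicit Arguments.
Inductive lam := L1 | Lx.

(* the 2(n-1) symbols s_i(1), s_i(x), 1 <= i <= n-1; the ordinal k stands
   for i = k+1 *)
Definition sym (n : nat) := ('I_(n.-1) * lam)%type.

(* s_i(l) as an element of F (only used for 1 <= i <= n-1) *)
Definition s (n : nat) (i : nat) (l : lam) : word (sym n) :=
  match @insub nat (fun k => k < n.-1) _ i.-1 with
  | Some k => [:: ((k, l), false)]
  | None => [::]
  end.

Definition Rel (n m1 m2 : nat) (w : word (sym n)) : Prop :=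
  (exists i, [/\ 1 <= i, i <= n - 1 &
        w = wmul (wpow (s n i L1) m1) (winv (wpow (s n i Lx) m1))]) \/
      (exists i, [/\ 1 <= i, i <= n - 1 & w = wpow (s n i Lx) m2]) \/
      (exists i, [/\ 1 <= i, i <= n - 1 & w = wcomm (s n i L1) (s n i Lx)]) \/
      (exists i j a b, [/\ 1 <= i, i < j - 1, j - 1 <= n - 2 &
        w = wcomm (s n i a) (s n j b)]) \/
    (exists i a, [/\ 1 <= i, i <= n - 2 &
        [\/ w = wmul (wcomm (winv (s n i a)) (winv (s n i.+1 Lx)))
                     (winv (wcomm (s n i Lx) (s n i.+1 L1))),
            w = wcomm (wcomm (s n i a) (s n i.+1 L1)) (s n i L1),
            w = wcomm (wcomm (s n i a) (s n i.+1 L1)) (s n i.+1 L1)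
          | i <= n - 3 /\ (exists b,
            w = wcomm (wcomm (s n i a) (s n i.+1 L1))
                      (wcomm (s n i.+1 b) (s n i.+2 L1)))]]).

Definition Rn (n m1 m2 : nat) : word (sym n) -> Prop := ncl (Rel n m1 m2).

Definition RF (n m1 m2 : nat) : word (sym n) -> Prop := commRF (Rn n m1 m2).

(* the order of the image of g in F/[R,F] divides d, i.e. g^d lies in [R,F] *)
Definition ord_dvd (n m1 m2 : nat) (g : word (sym n)) (d : nat) : Prop :=
  RF n m1 m2 (wpow g d).

(* Every relator lies in R, so its image in G = F/[R,F] is central: the image
   Z of R is a central subgroup of G, and every defining relation of UT_n
   holds in G modulo Z.  Each of the five items then follows from commutator
   calculus modulo a central subgroup. *)

From mathcomp Require Import all_boot zify.
From Stdlib Require Import FunctionalExtensionality PropExtensionality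
  ProofIrrelevance ClassicalEpsilon.

Set Implicit Arguments. Unset Strict Implicit. Unset Printing Implicit Defensive.

(* Groups given by their axioms: MathComp's group theory only covers finite
   groups, while F/[R,F] is an infinite group of words. *)
Record group := Group {
  elt :> Type;
  gmul : elt -> elt -> elt;
  ginv : elt -> elt;
  gone : elt;
  gmulA : forall x y z, gmul x (gmul y z) = gmul (gmul x y) z;
  gmul1 : forall x, gmul gone x = x;
  gmulV : forall x, gmul (ginv x) x = gone }.
Arguments gmul {_}. Arguments ginv {_}. Arguments gone {_}.

Declare Scope group_scope.
Delimit Scope group_scope with g.
Notation "x * y" := (gmul x y) : group_scope.
Notation "x ^-1" := (ginv x) : group_scope.
Notation "1" := gone : group_scope.
Local Open Scope group_scope.

Section GroupTheory.
Variable G : group.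
Implicit Types x y z : G.

Lemma mulgA x y z : x * (y * z) = x * y * z. Proof. exact: gmulA. Qed.
Lemma mul1g x : 1 * x = x. Proof. exact: gmul1. Qed.
Lemma mulVg x : x^-1 * x = 1. Proof. exact: gmulV. Qed.
Lemma mulKg x y : x^-1 * (x * y) = y. Proof. by rewrite mulgA mulVg mul1g. Qed.
Lemma mulgV x : x * x^-1 = 1.
Proof. by have := mulKg x^-1 (x * x^-1); rewrite (mulKg x x^-1) mulVg => <-. Qed.
Lemma mulg1 x : x * 1 = x. Proof. by rewrite -(mulVg x) mulgA mulgV mul1g. Qed.
Lemma mulKVg x y : x * (x^-1 * y) = y. Proof. by rewrite mulgA mulgV mul1g. Qed.
Lemma mulgK x y : x * y * y^-1 = x. Proof. by rewrite -mulgA mulgV mulg1. Qed.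
Lemma mulgKV x y : x * y^-1 * y = x. Proof. by rewrite -mulgA mulVg mulg1. Qed.
Lemma mulgI x y z : x * y = x * z -> y = z.
Proof. by move=> e; rewrite -(mulKg x y) e mulKg. Qed.
Lemma mulg_eq1 x y : x * y = 1 -> x = y^-1.
Proof. by move=> e; rewrite -(mulgK x y) e mul1g. Qed.
Lemma mulg_fix1 x y : x * y = y -> x = 1.
Proof. by move=> e; rewrite -(mulgK x y) e mulgV. Qed.
Lemma invg_unique x y : x * y = 1 -> x^-1 = y.
Proof. by move=> e; rewrite -(mulKg x y) e mulg1. Qed.
Lemma invgK x : x^-1^-1 = x. Proof. by apply: invg_unique; rewrite mulVg. Qed.
Lemma invMg x y : (x * y)^-1 = y^-1 * x^-1.
Proof. by apply: invg_unique; rewrite mulgA -(mulgA x) mulgV mulg1 mulgV. Qed.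
Lemma invg1 : (1 : G)^-1 = 1. Proof. by apply: invg_unique; rewrite mul1g. Qed.

End GroupTheory.

Ltac gsimpl := rewrite ?invMg ?invgK ?invg1; rewrite ?mulgA;
  rewrite ?mulgK ?mulgKV ?mulgV ?mulVg ?mulg1 ?mul1g;
  rewrite ?mulgK ?mulgKV ?mulgV ?mulVg ?mulg1 ?mul1g.

Section Commutators.
Variable G : group.
Implicit Types x y z g : G.

Definition conj x g := g^-1 * x * g.
Definition comm x y := x^-1 * y^-1 * x * y.
Fixpoint pow x k := if k is k'.+1 then x * pow x k' else 1.

Lemma conjE x g : conj x g = x * comm x g. Proof. by rewrite /conj /comm; gsimpl. Qed.
Lemma commE x g : comm x g = x^-1 * conj x g. Proof. by rewrite conjE mulKg. Qed.
Lemma conjM x y g : conj (x * y) g = conj x g * conj y g. Proof. by rewrite /conj; gsimpl. Qed.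
Lemma conjV x g : conj x^-1 g = (conj x g)^-1. Proof. by rewrite /conj; gsimpl. Qed.
Lemma conjg1 x : conj x 1 = x. Proof. by rewrite /conj; gsimpl. Qed.
Lemma conjMr x g h : conj x (g * h) = conj (conj x g) h. Proof. by rewrite /conj; gsimpl. Qed.
Lemma conjK x g : conj (conj x g) g^-1 = x. Proof. by rewrite /conj; gsimpl. Qed.
Lemma conjKV x g : conj (conj x g^-1) g = x. Proof. by rewrite /conj; gsimpl. Qed.
Lemma conj_comm x y g : conj (comm x y) g = comm (conj x g) (conj y g).
Proof. by rewrite /comm !conjM !conjV. Qed.
Lemma invg_comm x y : (comm x y)^-1 = comm y x. Proof. by rewrite /comm; gsimpl. Qed.
Lemma commMr x y w : comm x (y * w) = comm x w * conj (comm x y) w.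
Proof. by rewrite /comm /conj; gsimpl. Qed.
Lemma commMl x y w : comm (x * w) y = conj (comm x y) w * comm w y.
Proof. by rewrite /comm /conj; gsimpl. Qed.
Lemma commgg x : comm x x = 1. Proof. by rewrite /comm; gsimpl. Qed.
Lemma comm_xxy x y : comm x (x * y) = comm x y. Proof. by rewrite /comm; gsimpl. Qed.
Lemma commg1 x : comm x 1 = 1. Proof. by rewrite /comm; gsimpl. Qed.
Lemma comm1g x : comm 1 x = 1. Proof. by rewrite /comm; gsimpl. Qed.
Lemma commute_comm1 x y : comm x y = 1 -> x * y = y * x.
Proof.
have h : y * x * comm x y = x * y by rewrite /comm; gsimpl.
by move=> e; rewrite -h e mulg1.
Qed.
Lemma comm1_commute x y : x * y = y * x -> comm x y = 1.
Proof. by rewrite /comm => e; rewrite -mulgA e -invMg mulVg. Qed.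
Lemma comm_of_conj x g h : conj x g = x * h -> comm x g = h.
Proof. by move=> e; rewrite commE e mulKg. Qed.
Lemma conjV_of_comm1 x g : comm x g = 1 -> conj x g^-1 = x.
Proof. by move=> e; rewrite -{1}(mulg1 x) -e -conjE conjK. Qed.

Lemma powS x k : pow x k.+1 = x * pow x k. Proof. by []. Qed.
Lemma pow1g k : pow (1 : G) k = 1. Proof. by elim: k => //= k ->; rewrite mulg1. Qed.
Lemma powD x a b : pow x (a + b) = pow x a * pow x b.
Proof. by elim: a => [|a IH] /=; rewrite ?mul1g // IH mulgA. Qed.
Lemma powSr x k : pow x k.+1 = pow x k * x.
Proof. by rewrite -addn1 powD /= mulg1. Qed.
Lemma powM x a b : pow x (a * b) = pow (pow x a) b.
Proof. by elim: b => [|b IH]; rewrite ?muln0 // mulnS powD IH. Qed.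
Lemma powV x k : pow x^-1 k = (pow x k)^-1.
Proof. by elim: k => [|k IH] /=; rewrite ?invg1 // IH -invMg -powS powSr. Qed.
Lemma pow_commute x y k : x * y = y * x -> pow x k * y = y * pow x k.
Proof. by move=> e; elim: k => [|k IH] /=; rewrite ?mul1g ?mulg1 // -mulgA IH !mulgA e. Qed.
Lemma powMc x y k : x * y = y * x -> pow (x * y) k = pow x k * pow y k.
Proof.
move=> e; elim: k => [|k IH] /=; first by rewrite mulg1.
by rewrite IH !mulgA -(mulgA x) -(pow_commute k e) !mulgA.
Qed.
Lemma pow_gcd x a b : pow x a = 1 -> pow x b = 1 -> pow x (gcdn a b) = 1.
Proof.
elim/ltn_ind: a b => a IH b ha hb; case: (posnP a) => [->|a0]; first by rewrite gcd0n.
rewrite -gcdn_modr gcdnC; apply: IH => //; first exact: ltn_pmod.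
by move: hb; rewrite {1}(divn_eq b a) powD mulnC powM ha pow1g mul1g.
Qed.

End Commutators.

(* A central subgroup Z of G, given as a predicate.  In F/[R,F] the image
   of R is such a subgroup; all the computations below take place modulo it. *)
Record central (G : group) (Z : G -> Prop) : Prop := Central {
  central1 : Z 1;
  centralM : forall x y, Z x -> Z y -> Z (x * y);
  centralV : forall x, Z x -> Z x^-1;
  centralC : forall x y, Z x -> x * y = y * x }.

Section CentralCalculus.
Variables (G : group) (Z : G -> Prop).
Hypothesis HZ : central Z.
Implicit Types x y z w g : G.

Let ZM := centralM HZ.
Let ZV := centralV HZ.
Let ZC := centralC HZ.

Lemma conj_central z g : Z z -> conj z g = z.
Proof. by move=> hz; rewrite /conj -mulgA (ZC g hz) mulKg. Qed.
Lemma conj_by_central x z : Z z -> conj x z = x.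
Proof. by move=> hz; rewrite /conj -mulgA -(ZC x hz) mulKg. Qed.
Lemma mulg_centralK a g b : Z g -> a * g * b * g^-1 = a * b.
Proof. by move=> hg; rewrite -(mulgA a) (ZC b hg) mulgA mulgK. Qed.
Lemma comm_centrall z x : Z z -> comm z x = 1.
Proof. by move=> hz; apply: comm1_commute; exact: ZC. Qed.
Lemma comm_centralr x z : Z z -> comm x z = 1.
Proof. by move=> hz; apply: comm1_commute; symmetry; exact: ZC. Qed.

Lemma commMzl x z y : Z z -> comm (x * z) y = comm x y.
Proof. by move=> hz; rewrite commMl conj_by_central // (comm_centrall y hz) mulg1. Qed.
Lemma commMzr x y z : Z z -> comm x (y * z) = comm x y.
Proof. by move=> hz; rewrite commMr conj_by_central // (comm_centralr x hz) mul1g. Qed.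
Lemma commzMl z x y : Z z -> comm (z * x) y = comm x y.
Proof. by move=> hz; rewrite (ZC x hz) commMzl. Qed.
Lemma commzMr x z y : Z z -> comm x (z * y) = comm x y.
Proof. by move=> hz; rewrite (ZC y hz) commMzr. Qed.
Lemma comm_modl x y w : Z (x * y^-1) -> comm x w = comm y w.
Proof. by move=> h; rewrite -[x](mulgKV x y) commzMl. Qed.
Lemma comm_modr x y w : Z (x * y^-1) -> comm w x = comm w y.
Proof. by move=> h; rewrite -[x](mulgKV x y) commzMr. Qed.
Lemma central_divC x y : Z (x * y^-1) -> Z (y * x^-1).
Proof. by move=> h; have := ZV h; rewrite invMg invgK. Qed.

Lemma Zcomm_sym x y : Z (comm x y) -> Z (comm y x).
Proof. by move=> h; rewrite -invg_comm; apply: ZV. Qed.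
Lemma commVr x y : Z (comm x y) -> comm x y^-1 = (comm x y)^-1.
Proof.
move=> h; have e := commMr x y y^-1.
rewrite mulgV commg1 conj_central // in e.
by symmetry; apply: invg_unique; rewrite (ZC _ h) -e.
Qed.
Lemma commVl x y : Z (comm x y) -> comm x^-1 y = (comm x y)^-1.
Proof. by move=> h; rewrite -invg_comm commVr ?invgK ?invg_comm //; exact: Zcomm_sym. Qed.
Lemma commM_central c x y :
  Z (comm c x) -> Z (comm c y) -> comm c (x * y) = comm c x * comm c y.
Proof. by move=> h1 h2; rewrite commMr conj_central // (ZC _ h2). Qed.
Lemma Zcomm_invr x y : Z (comm x y) -> Z (comm x y^-1).
Proof. by move=> h; rewrite commVr //; apply: ZV. Qed.
Lemma Zcomm_divr c x y : Z (comm c x) -> Z (comm c y) -> Z (comm c (x * y^-1)).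
Proof. by move=> h1 /Zcomm_invr h2; rewrite commM_central //; exact: ZM. Qed.
Lemma comm_divr c x y :
  Z (comm c x) -> Z (comm c y) -> comm c (x * y^-1) = comm c x * (comm c y)^-1.
Proof. by move=> h1 h2; rewrite commM_central //; [rewrite commVr | exact: Zcomm_invr]. Qed.

Lemma conj_comm_central x y g :
  Z (comm x g) -> Z (comm y g) -> conj (comm x y) g = comm x y.
Proof. by move=> h1 h2; rewrite conj_comm !conjE commMzl // commMzr. Qed.
Lemma comm_comm_central x y g :
  Z (comm g x) -> Z (comm g y) -> comm (comm x y) g = 1.
Proof.
by move=> h1 h2; rewrite commE conj_comm_central ?mulVg //; exact: Zcomm_sym.
Qed.

Lemma pow_central x k : Z x -> Z (pow x k).
Proof. by move=> h; elim: k => [|k IH] /=; [exact: (central1 HZ) | exact: ZM]. Qed.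
Lemma powMzl x y k : Z x -> pow (x * y) k = pow x k * pow y k.
Proof. by move=> h; apply: powMc; exact: ZC. Qed.
Lemma powMzr x y k : Z y -> pow (x * y) k = pow x k * pow y k.
Proof. by move=> h; apply: powMc; symmetry; exact: ZC. Qed.
Lemma pow_div_eq1 a b k : Z b -> pow a k = pow b k -> pow (a * b^-1) k = 1.
Proof. by move=> hb e; rewrite powMzr ?powV ?e ?mulgV //; exact: ZV. Qed.
Lemma pow_div_central a b k : Z b -> pow (a * b^-1) k = pow a k * (pow b k)^-1.
Proof. by move=> hb; rewrite powMzr ?powV //; exact: ZV. Qed.
Lemma central_ratio p q x1 x2 y1 y2 :
  Z x1 -> Z x2 -> Z y1 -> Z y2 -> p * x1 = q * y1 -> p * x2 = q * y2 ->
  x1 * x2^-1 = y1 * y2^-1.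
Proof.
move=> h1 h2 h3 h4 e1 e2.
have cancel r u v : Z u -> Z v -> r * u * (r * v)^-1 = u * v^-1.
  move=> hu hv; rewrite invMg -mulgA (mulgA u) (ZC r^-1 (ZM hu (ZV hv))).
  by rewrite mulKVg.
by rewrite -(cancel p) // e1 e2 cancel.
Qed.

Lemma conj_pow e y k : Z (comm e y) -> conj e (pow y k) = e * pow (comm e y) k.
Proof.
move=> h; elim: k => [|k IH]; first by rewrite /= conjg1 mulg1.
by rewrite powS conjMr (conjE e y) conjM IH conj_central // powS -mulgA (pow_commute _ (ZC _ h)).
Qed.
Lemma comm_powr x y k : Z (comm x y) -> comm x (pow y k) = pow (comm x y) k.
Proof.
move=> h; elim: k => [|k IH]; first by rewrite commg1.
by rewrite powS commM_central ?IH //; apply: pow_central.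
Qed.
Lemma comm_powl x y k : Z (comm x y) -> comm (pow x k) y = pow (comm x y) k.
Proof.
move=> h; rewrite -(invg_comm y) comm_powr; last exact: Zcomm_sym.
by rewrite -powV invg_comm.
Qed.
Lemma comm_powr_expand x y k : Z (comm (comm x y) y) ->
  comm x (pow y k) = pow (comm x y) k * pow (comm (comm x y) y) 'C(k, 2).
Proof.
move=> h; elim: k => [|k IH]; first by rewrite commg1 mulg1.
rewrite powS commMr IH conj_pow // binS bin1 powD.
have hq j : Z (pow (comm (comm x y) y) j) by exact: pow_central.
set q := comm (comm x y) y in hq *; set e := comm x y in q hq *; clearbody q e.
rewrite powSr -!mulgA; congr (_ * _).
by rewrite mulgA (ZC _ (hq _)) -mulgA.
Qed.
Lemma comm_powl_expand x y k : Z (comm (comm x y) x) ->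
  comm (pow x k) y = pow (comm x y) k * pow (comm (comm x y) x) 'C(k, 2).
Proof.
move=> h; elim: k => [|k IH]; first by rewrite comm1g mulg1.
rewrite powS commMl IH conj_pow // binS bin1 powD.
have hq j : Z (pow (comm (comm x y) x) j) by exact: pow_central.
set q := comm (comm x y) x in hq *; set e := comm x y in q hq *; clearbody q e.
rewrite powS -!mulgA; congr (_ * _).
by rewrite mulgA (ZC (pow e k) (hq k)) -mulgA (ZC _ (hq k)).
Qed.

Lemma pow_comml_mod x y w k : Z (comm x w) -> Z (comm y w) ->
  Z (pow x k * (pow y k)^-1) -> pow (comm x w) k = pow (comm y w) k.
Proof. by move=> h1 h2 h; rewrite -!comm_powl // (comm_modl _ h). Qed.
Lemma pow_commr_mod x y w k : Z (comm w x) -> Z (comm w y) ->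
  Z (pow x k * (pow y k)^-1) -> pow (comm w x) k = pow (comm w y) k.
Proof. by move=> h1 h2 h; rewrite -!comm_powr // (comm_modr _ h). Qed.

End CentralCalculus.

(* A commutator identity for three elements X, Y, W, with W commuting with X
   and [X,Y], [Y,W] of class two, all modulo Z:  k = [[X,Y],[Y,W]] has order
   dividing 2 and controls [[X,Y],W] and [[X,Y],W,Y]. *)
Section ThreeElements.
Variables (G : group) (Z : G -> Prop).
Hypothesis HZ : central Z.

Record triple (X Y W : G) : Prop := Triple {
  triple_XW : Z (comm X W);
  triple_cX : Z (comm (comm X Y) X);
  triple_cY : Z (comm (comm X Y) Y);
  triple_eY : Z (comm (comm Y W) Y);
  triple_eW : Z (comm (comm Y W) W);
  triple_k : Z (comm (comm X Y) (comm Y W)) }.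

Variables X Y W : G.
Hypothesis HT : triple X Y W.
Let hXW := triple_XW HT.
Let hcX := triple_cX HT.
Let hcY := triple_cY HT.
Let heY := triple_eY HT.
Let heW := triple_eW HT.
Let hk := triple_k HT.
Local Notation c := (comm X Y).
Local Notation e := (comm Y W).
Local Notation k := (comm c e).

Lemma comm_cW_Y : comm (comm c W) Y = k^-1.
Proof.
have ceW : comm (comm c W) e = 1 by apply: (comm_comm_central HZ (Zcomm_sym HZ hk) heW).
apply: comm_of_conj; rewrite conj_comm (conjE c Y) (commMzl HZ _ _ hcY) (conjE W Y).
rewrite -(invg_comm Y W) commMr (commVr HZ hk) (conjV_of_comm1 ceW).
by rewrite (centralC HZ _ (centralV HZ hk)).
Qed.

Lemma comm_cW : comm c W = comm X e * k.
Proof.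
have eW := conjE c W.
rewrite conj_comm (conjE X W) (commMzl HZ _ _ hXW) (conjE Y W) commMr (conjE c e) in eW.
have hXe := conj_comm_central HZ (Zcomm_sym HZ hcX) (Zcomm_sym HZ hk).
by rewrite -[comm c W](mulKg c) -eW mulgA mulgA -/(conj _ c) hXe.
Qed.

Lemma comm_Xe_Y : comm (comm X e) Y = k.
Proof.
apply: comm_of_conj; rewrite conj_comm (conjE X Y) (conjE e Y) (commMzr HZ _ _ heY).
by rewrite commMl (conj_comm_central HZ (Zcomm_sym HZ hcX) (Zcomm_sym HZ hk)).
Qed.

Lemma comm_sq1 : k * k = 1.
Proof.
have := comm_cW_Y; rewrite comm_cW (commMzl HZ _ _ hk) comm_Xe_Y => ek.
by rewrite {1}ek mulVg.
Qed.

End ThreeElements.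

(* The relations of one root subgroup, imposed modulo Z: the generators
   A = s_i(1), B = s_i(x) commute, A^m1 = B^m1 and B^m2 = 1. *)
Section RootRelations.
Variables (G : group) (Z : G -> Prop) (m1 m2 : nat).
Hypothesis HZ : central Z.

Record root_pair (A B : G) : Prop := RootPair {
  root_comm : Z (comm A B);
  root_pow1 : Z (pow A m1 * (pow B m1)^-1);
  root_pow2 : Z (pow B m2) }.

(* A^m2 = (A^m1)^(m2/m1) = (B^m1)^(m2/m1) = B^m2 modulo Z. *)
Lemma root_pow2A A B : (m1 %| m2)%N -> root_pair A B -> Z (pow A m2).
Proof.
move=> /dvdnP[q def_m2] [_ hp hB]; rewrite def_m2 in hB *.
rewrite mulnC powM -[pow A m1](mulgKV _ (pow B m1)) (powMzl HZ) //.
by apply: (centralM HZ); [exact: (pow_central HZ) | rewrite -powM mulnC].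
Qed.

(* Item (1): [s_i(1), s_i(x)]^m1 = [s_i(x)^m1, s_i(x)] = 1. *)
Lemma root_comm_order A B : root_pair A B -> pow (comm A B) m1 = 1.
Proof.
case=> hAB hp _; rewrite -(comm_powl HZ _ hAB) (comm_modl HZ _ hp).
by rewrite (comm_powl HZ) commgg ?pow1g //; exact: central1 HZ.
Qed.

Lemma distant_comm_orders Ai Bi Aj Bj : (m1 %| m2)%N ->
  root_pair Ai Bi -> root_pair Aj Bj ->
  Z (comm Ai Aj) -> Z (comm Ai Bj) -> Z (comm Bi Aj) -> Z (comm Bi Bj) ->
  [/\ pow (comm Ai Aj) m2 = 1,
      pow (comm Bi Bj * (comm Ai Aj)^-1) m1 = 1,
      pow (comm Bi Aj * (comm Bi Bj)^-1) m1 = 1 &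
      pow (comm Ai Bj * (comm Bi Bj)^-1) m1 = 1].
Proof.
move=> hd ri rj hAA hAB hBA hBB.
have e1 : pow (comm Ai Aj) m1 = pow (comm Bi Aj) m1.
  exact: (pow_comml_mod HZ) (root_pow1 ri).
have e2 : pow (comm Bi Aj) m1 = pow (comm Bi Bj) m1.
  exact: (pow_commr_mod HZ) (root_pow1 rj).
have e3 : pow (comm Ai Bj) m1 = pow (comm Bi Bj) m1.
  exact: (pow_comml_mod HZ) (root_pow1 ri).
split; try by apply: (pow_div_eq1 HZ).
- by rewrite -(comm_powr HZ _ hAA) (comm_centralr HZ _ (root_pow2A hd rj)).
- by apply: (pow_div_eq1 HZ) => //; rewrite -e2 -e1.
Qed.

End RootRelations.

(* The relations between two adjacent root subgroups A = s_i(1), B = s_i(x),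
   C = s_{i+1}(1), D = s_{i+1}(x), imposed modulo Z; t = [B, C] and
   c = [A, C]. *)
Record adjacent_pair (G : group) (Z : G -> Prop) (A B C D : G) : Prop :=
  AdjacentPair {
  adj_QA : Z (comm A^-1 D^-1 * (comm B C)^-1);
  adj_QB : Z (comm B^-1 D^-1 * (comm B C)^-1);
  adj_tA : Z (comm (comm B C) A);
  adj_tC : Z (comm (comm B C) C);
  adj_cA : Z (comm (comm A C) A);
  adj_cC : Z (comm (comm A C) C) }.

Section AdjacentPair.
Variables (G : group) (Z : G -> Prop).
Hypothesis HZ : central Z.
Variables A B C D : G.
Hypotheses (hCD : Z (comm C D)) (adj : adjacent_pair Z A B C D).
Local Notation t := (comm B C).
Local Notation c := (comm A C).
Let htA := adj_tA adj.
Let htC := adj_tC adj.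

Lemma conj_invD X : Z (comm X^-1 D^-1 * t^-1) ->
  exists2 z, Z z & conj X D^-1 = t^-1 * (z * X).
Proof.
move=> hQ; exists (comm X^-1 D^-1 * t^-1)^-1; first exact: (centralV HZ).
by rewrite -[X in LHS]invgK conjV conjE; gsimpl.
Qed.

Lemma conj_commC_D X : Z (comm X^-1 D^-1 * t^-1) ->
  conj (comm X C) D = comm X C * comm t C.
Proof.
move=> /conj_invD[z hz eX].
have eXinv : conj (comm X C) D^-1 = (comm t C)^-1 * comm X C.
  rewrite conj_comm eX (conjE C D^-1) (commMzr HZ _ _ (Zcomm_invr HZ hCD)).
  rewrite (centralC HZ X hz) mulgA (commMzl HZ _ _ hz) commMl (commVl HZ htC).
  by rewrite (conj_central HZ _ (centralV HZ htC)).
have := conjKV (comm X C) D; rewrite eXinv conjM (conj_central HZ _ (centralV HZ htC)).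
move=> e; apply: (mulgI (x := (comm t C)^-1)); rewrite e.
by rewrite -(centralC HZ (comm X C) htC) mulKg.
Qed.

Lemma comm_tD : comm t D = comm t C.
Proof. exact: comm_of_conj (conj_commC_D (adj_QB adj)). Qed.
Lemma comm_cD : comm c D = comm t C.
Proof. exact: comm_of_conj (conj_commC_D (adj_QA adj)). Qed.

Lemma conjD X : Z (comm X^-1 D^-1 * t^-1) -> exists2 z, Z z & conj X D = z * (t * X).
Proof.
move=> /conj_invD[z hz eX].
have htD : conj t D = t * comm t C by rewrite conjE comm_tD.
have := conjKV X D; rewrite eX !conjM conjV htD (conj_central HZ _ hz).
set W := conj X D; clearbody W => e.
exists (z^-1 * comm t C); first exact: (centralM HZ (centralV HZ hz) htC).
rewrite -e; have := htC; move: (comm B C) (comm t C) => u g hg.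
by gsimpl; rewrite (mulg_centralK HZ _ _ hg); gsimpl.
Qed.

Lemma comm_ct : comm c t = 1.
Proof. exact: (comm_comm_central HZ htA htC). Qed.

Lemma comm_tB : Z (comm A B) -> comm t B = comm t A.
Proof.
move=> hAB; have [zA hzA eA] := conjD (adj_QA adj).
have [zB hzB eB] := conjD (adj_QB adj).
have := conj_comm A B D.
rewrite (conj_central HZ _ hAB) eA eB (commzMl HZ _ _ hzA) (commzMr HZ _ _ hzB).
rewrite commMl comm_xxy commMr (conj_central HZ _ (Zcomm_sym HZ htA)).
rewrite (centralC HZ (comm A t) hAB) mulgA => /esym/mulg_fix1/mulg_eq1.
rewrite invg_comm => e.
by rewrite -[comm t B](conjK _ A) e (conj_central HZ _ htA).
Qed.

Lemma comm_cB : Z (comm A B) -> comm c B = comm t A.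
Proof.
move=> hAB; apply: comm_of_conj.
rewrite conj_comm !conjE (commMzl HZ _ _ hAB) -(invg_comm B C).
rewrite commMr (commVr HZ (Zcomm_sym HZ htA)) invg_comm (conjV_of_comm1 comm_ct).
by rewrite (centralC HZ _ htA).
Qed.

Lemma commD_mod X : Z (comm X^-1 D^-1 * t^-1) -> Z (comm t X) ->
  Z (comm X D * t^-1).
Proof.
move=> /conjD[z hz eX] htX.
rewrite commE eX (_ : X^-1 * (z * (t * X)) = z * (t * comm t X)).
  by rewrite -(centralC HZ t htX) mulgA mulgK; exact: (centralM HZ hz htX).
by rewrite -conjE /conj mulgA -(centralC HZ X^-1 hz) !mulgA.
Qed.

End AdjacentPair.

Section AdjacentOrders.
Variables (G : group) (Z : G -> Prop) (m1 m2 : nat).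
Hypothesis HZ : central Z.
Variables A B C D : G.
Hypotheses (rAB : root_pair Z m1 m2 A B) (rCD : root_pair Z m1 m2 C D)
  (adj : adjacent_pair Z A B C D).
Local Notation t := (comm B C).
Local Notation c := (comm A C).
Let hCD := root_comm rCD.
Let htA := adj_tA adj.
Let htC := adj_tC adj.
Let hcA := adj_cA adj.
Let hcC := adj_cC adj.
Let htB : Z (comm t B). Proof. by rewrite (comm_tB HZ hCD adj (root_comm rAB)). Qed.
Let hcB : Z (comm c B). Proof. by rewrite (comm_cB HZ adj (root_comm rAB)). Qed.
Let hcD : Z (comm c D). Proof. by rewrite (comm_cD HZ hCD adj). Qed.
Let hwA : Z (comm A D * t^-1). Proof. exact: (commD_mod HZ hCD adj (adj_QA adj)). Qed.
Let hwB : Z (comm B D * t^-1). Proof. exact: (commD_mod HZ hCD adj (adj_QB adj)). Qed.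

Let commAD_comm Y : comm (comm A D) Y = comm t Y.
Proof. by rewrite -[comm A D](mulgKV _ t) (commzMl HZ _ _ hwA). Qed.
Let commBD_comm Y : comm (comm B D) Y = comm t Y.
Proof. by rewrite -[comm B D](mulgKV _ t) (commzMl HZ _ _ hwB). Qed.

(* Item (3), second element: expand [B, C^m1] = [B, D^m1]. *)
Lemma commBD_order : pow (comm B D * t^-1) m1 = 1.
Proof.
have hBDD : Z (comm (comm B D) D) by rewrite commBD_comm (comm_tD HZ hCD adj).
have e := comm_modr HZ B (root_pow1 rCD).
rewrite (comm_powr_expand HZ m1 htC) (comm_powr_expand HZ m1 hBDD) in e.
rewrite commBD_comm (comm_tD HZ hCD adj) -[comm B D](mulgKV _ t) in e.
rewrite (powMzl HZ _ _ hwB) -mulgA in e.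
exact: mulg_fix1 (esym e).
Qed.

(* Item (3), first element: expand [A^m1, D] = [B^m1, D]. *)
Lemma commAD_order : pow (comm A D * t^-1) m1 = 1.
Proof.
have hADA : Z (comm (comm A D) A) by rewrite commAD_comm.
have hBDB : Z (comm (comm B D) B) by rewrite commBD_comm.
have e := comm_modl HZ D (root_pow1 rAB).
rewrite (comm_powl_expand HZ m1 hADA) (comm_powl_expand HZ m1 hBDB) in e.
rewrite commAD_comm commBD_comm (comm_tB HZ hCD adj (root_comm rAB)) in e.
rewrite -[comm A D](mulgKV _ t) -[comm B D](mulgKV _ t) in e.
rewrite (powMzl HZ _ _ hwA) (powMzl HZ _ _ hwB) commBD_order mul1g -mulgA in e.
exact: mulg_fix1 e.
Qed.

Lemma expand_powA_C :
  pow c m1 * pow (comm c A) 'C(m1, 2) = pow t m1 * pow (comm t A) 'C(m1, 2).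
Proof.
have e := comm_modl HZ C (root_pow1 rAB).
rewrite (comm_powl_expand HZ m1 hcA) (comm_powl_expand HZ m1 htB) in e.
by rewrite e (comm_tB HZ hCD adj (root_comm rAB)).
Qed.

Lemma expand_A_powC :
  pow c m1 * pow (comm c C) 'C(m1, 2) = pow t m1 * pow (comm t C) 'C(m1, 2).
Proof.
have hADD : Z (comm (comm A D) D) by rewrite commAD_comm (comm_tD HZ hCD adj).
have e := comm_modr HZ A (root_pow1 rCD).
rewrite (comm_powr_expand HZ m1 hcC) (comm_powr_expand HZ m1 hADD) in e.
rewrite commAD_comm (comm_tD HZ hCD adj) -[comm A D](mulgKV _ t) in e.
by rewrite e (powMzl HZ _ _ hwA) commAD_order mul1g.
Qed.

Hypothesis m1_dvd_m2 : (m1 %| m2)%N.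

(* Item (4), first element: [c, A]^m2 = [c, A^m2] = 1. *)
Lemma cA_order : pow (comm c A) m2 = 1.
Proof. by rewrite -(comm_powr HZ _ hcA) (comm_centralr HZ _ (root_pow2A HZ m1_dvd_m2 rAB)). Qed.

(* Item (4), second element: both the m2-th and the binomial(m2,2)-th powers
   of [c, C A^-1] = [c, C][c, A]^-1 vanish. *)
Lemma cCA_order : pow (comm c (C * A^-1)) (gcdn m2 'C(m2, 2)) = 1.
Proof.
have hA2 := root_pow2A HZ m1_dvd_m2 rAB; have hC2 := root_pow2A HZ m1_dvd_m2 rCD.
rewrite (comm_divr HZ hcC hcA); apply: pow_gcd; apply: (pow_div_eq1 HZ) => //.
  by rewrite -!(comm_powr HZ) // !(comm_centralr HZ).
apply: (mulgI (x := pow c m2)).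
by rewrite -(comm_powr_expand HZ m2 hcC) -(comm_powl_expand HZ m2 hcA) (comm_centralr HZ _ hC2) (comm_centrall HZ _ hA2).
Qed.

(* Item (4), third element: [c, B]^m1 = [c, A]^m1 since B^m1 = A^m1. *)
Lemma cBA_order : pow (comm c (B * A^-1)) m1 = 1.
Proof.
rewrite (comm_divr HZ hcB hcA); apply: (pow_div_eq1 HZ) => //.
exact: (pow_commr_mod HZ hcB hcA (central_divC HZ (root_pow1 rAB))).
Qed.

(* Item (4), last element, rewritten as [c, B][c, D]^-1 ([c, A][c, C]^-1)^-1. *)
Lemma cBDAC_order :
  pow (comm c (B * D^-1 * (A * C^-1)^-1)) (gcdn m1 'C(m1, 2)) = 1.
Proof.
have hBD := Zcomm_divr HZ hcB hcD; have hAC := Zcomm_divr HZ hcA hcC.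
rewrite (comm_divr HZ hBD hAC) (comm_divr HZ hcB hcD) (comm_divr HZ hcA hcC).
apply: pow_gcd; apply: (pow_div_eq1 HZ); rewrite -?(comm_divr HZ) //.
  rewrite !(comm_divr HZ) // !(pow_div_central HZ) //.
  by rewrite (pow_commr_mod HZ hcB hcA (central_divC HZ (root_pow1 rAB)))
             (pow_commr_mod HZ hcD hcC (central_divC HZ (root_pow1 rCD))).
rewrite !(comm_divr HZ) // (comm_cB HZ adj (root_comm rAB)) (comm_cD HZ hCD adj).
rewrite !(pow_div_central HZ) //.
apply: (central_ratio HZ (p := pow t m1) (q := pow c m1)); try exact: (pow_central HZ).
  by rewrite expand_powA_C.
by rewrite expand_A_powC.
Qed.

End AdjacentOrders.

(* Item (5): three consecutive root subgroups A, B | C, D | E, F. *)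
Section ConsecutiveOrders.
Variables (G : group) (Z : G -> Prop) (m1 m2 : nat).
Hypothesis HZ : central Z.
Variables A B C D E F : G.
Hypotheses (hAB : Z (comm A B)) (rCD : root_pair Z m1 m2 C D)
  (adjAC : adjacent_pair Z A B C D) (adjCE : adjacent_pair Z C D E F)
  (hAE : Z (comm A E)) (hBE : Z (comm B E))
  (hce : Z (comm (comm A C) (comm C E))) (hte : Z (comm (comm B C) (comm C E))).
Local Notation t := (comm B C).
Local Notation c := (comm A C).
Local Notation e := (comm C E).
Let hCD := root_comm rCD.

Let tripleA : triple Z A C E.
Proof. by split=> //; case: adjAC; case: adjCE. Qed.
Let tripleB : triple Z B C E.
Proof.
split=> //; try by case: adjAC; case: adjCE.
by rewrite (comm_tB HZ hCD adjAC hAB); exact: adj_tA adjAC.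
Qed.

Lemma comm_Ae_D : comm (comm A e) D = comm t e.
Proof.
have [z hz eA] := conjD HZ hCD adjAC (adj_QA adjAC).
have hl : Z (comm C (comm D E)^-1).
  exact/(Zcomm_invr HZ)/(Zcomm_sym HZ)/(adj_tA adjCE).
have eD : conj e D = comm C (comm D E)^-1 * e.
  rewrite conj_comm (conjE C D) (commMzl HZ _ _ hCD) (conjE E D) -(invg_comm D E).
  rewrite commMr (conjV_of_comm1 (comm_comm_central HZ (adj_tA adjCE) (adj_tC adjCE))).
  by [].
apply: comm_of_conj; rewrite conj_comm eA eD (commzMl HZ _ _ hz) (commzMr HZ _ _ hl).
by rewrite commMl (conj_central HZ _ hte) (centralC HZ _ hte).
Qed.

Hypothesis m1_dvd_m2 : (m1 %| m2)%N.
Local Notation d := (comm c E).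

(* [d, C] = k^-1 with k = [c, e] of order 2, and C^m2 is central. *)
Lemma dC_order : pow (comm d C) (gcdn 2 m2) = 1.
Proof.
apply: pow_gcd.
  by rewrite (comm_cW_Y HZ tripleA) /= mulg1 -invMg (comm_sq1 HZ tripleA) invg1.
by rewrite -(comm_powr HZ) ?(comm_centralr HZ _ (root_pow2A HZ m1_dvd_m2 rCD)) ?(comm_cW_Y HZ tripleA) //; exact: (centralV HZ).
Qed.

(* [d, D C^-1] = [t, e] k, a product of two commuting elements of order 2;
   and [d, D]^m1 = [d, C]^m1 since D^m1 = C^m1. *)
Lemma dDC_order : pow (comm d (D * C^-1)) (gcdn 2 m1) = 1.
Proof.
have hdC : Z (comm d C) by rewrite (comm_cW_Y HZ tripleA); exact: (centralV HZ).
have edD : comm d D = comm t e.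
  by rewrite (comm_cW HZ tripleA) (commMzl HZ _ _ hce) comm_Ae_D.
have hdD : Z (comm d D) by rewrite edD.
rewrite (comm_divr HZ hdD hdC); apply: pow_gcd.
  rewrite edD (comm_cW_Y HZ tripleA) invgK /= mulg1.
  have := comm_sq1 HZ tripleB; have := comm_sq1 HZ tripleA.
  move: hce; move: (comm t e) (comm c e) => mu k hk k2 mu2.
  by rewrite -mulgA (mulgA k) (centralC HZ mu hk) -(mulgA mu k) k2 mulg1.
apply: (pow_div_eq1 HZ) => //.
exact: (pow_commr_mod HZ hdD hdC (central_divC HZ (root_pow1 rCD))).
Qed.

End ConsecutiveOrders.

Section FreeReduction.
Variable X : Type.
Implicit Types u v w : word X.

Lemma flipK (l : X * bool) : flipl (flipl l) = l.
Proof. by case: l => x b; rewrite /flipl /= negbK. Qed.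
Lemma winv_cat u v : winv (u ++ v) = winv v ++ winv u.
Proof. by rewrite /winv map_cat rev_cat. Qed.
Lemma winvK u : winv (winv u) = u.
Proof. by rewrite /winv map_rev revK -map_comp (eq_map flipK) map_id. Qed.

Lemma feq_map (f : word X -> word X) :
  (forall u v, red1 u v -> red1 (f u) (f v)) -> forall u v, feq u v -> feq (f u) (f v).
Proof.
move=> hf u v; elim=> {u v} [u|u v /hf|u v _|u v w _ IH1 _ IH2].
- exact: feq_refl.
- exact: feq_step.
- exact: feq_sym.
- exact: feq_trans IH1 IH2.
Qed.

Lemma feq_catl w u v : feq u v -> feq (w ++ u) (w ++ v).
Proof.
apply: (feq_map (f := cat w)) => _ _ [u1 v1 l].
by have := red1_step (w ++ u1) v1 l; rewrite -!catA.
Qed.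
Lemma feq_catr w u v : feq u v -> feq (u ++ w) (v ++ w).
Proof.
apply: (feq_map (f := cat^~ w)) => _ _ [u1 v1 l].
by have := red1_step u1 (v1 ++ w) l; rewrite -!catA.
Qed.
Lemma feq_inv u v : feq u v -> feq (winv u) (winv v).
Proof.
apply: (feq_map (f := @winv X)) => _ _ [u1 v1 l]; rewrite !winv_cat -catA.
have -> : winv [:: l; flipl l] = [:: l; flipl l] by rewrite /winv /= flipK.
exact: red1_step.
Qed.
Lemma feq_invr u : feq (u ++ winv u) [::].
Proof.
elim: u => [|l u IH] /=; first exact: feq_refl.
rewrite /winv /= rev_cons -cats1 -/(winv u) catA.
apply: feq_trans (_ : feq ([:: l] ++ [:: flipl l]) [::]).
  exact: (feq_catl [:: l] (feq_catr [:: flipl l] IH)).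
exact: (feq_step (red1_step [::] [::] l)).
Qed.
Lemma feq_invl u : feq (winv u ++ u) [::].
Proof. by have := feq_invr (winv u); rewrite winvK. Qed.

End FreeReduction.

Section QuotientGroup.
Variables (X : Type) (K : word X -> Prop).
Implicit Types u v w : word X.

Record normal_set : Prop := NormalSet {
  normal1 : K [::];
  normalM : forall u v, K u -> K v -> K (u ++ v);
  normalV : forall u, K u -> K (winv u);
  normal_feq : forall u v, feq u v -> K u -> K v;
  normalJ : forall u g, K u -> K (winv g ++ u ++ g) }.

Hypothesis HK : normal_set.

Definition congr_mod u v := K (winv u ++ v).

Lemma congr_mod_feq u v : feq u v -> congr_mod u v.
Proof.
move=> h; apply: (normal_feq HK _ (normal1 HK)); apply: feq_sym.
exact: feq_trans (feq_catl _ (feq_sym h)) (feq_invl u).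
Qed.
Lemma congr_mod_sym u v : congr_mod u v -> congr_mod v u.
Proof. by move/(normalV HK); rewrite /congr_mod winv_cat winvK. Qed.
Lemma congr_mod_trans u v w : congr_mod u v -> congr_mod v w -> congr_mod u w.
Proof.
move=> h1 h2; apply: (normal_feq HK _ (normalM HK h1 h2)).
rewrite -catA (catA v); apply: feq_catl.
exact: feq_catr (feq_invr v).
Qed.
Lemma congr_mod_cat u u' v v' :
  congr_mod u u' -> congr_mod v v' -> congr_mod (u ++ v) (u' ++ v').
Proof.
move=> h1 h2; apply: (normal_feq HK _ (normalM HK (normalJ HK v h1) h2)).
rewrite /congr_mod winv_cat -!catA.
apply: (feq_catl (winv v)); apply: (feq_catl (winv u)); apply: (feq_catl u').
by rewrite catA; exact: (feq_catr v' (feq_invr v)).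
Qed.
Lemma congr_mod_inv u v : congr_mod u v -> congr_mod (winv u) (winv v).
Proof.
move=> h; apply: (normal_feq HK _ (normalJ HK (winv u) (normalV HK h))).
rewrite winvK winv_cat winvK -!catA; apply: feq_catl.
by have := feq_catl (winv v) (feq_invr u); rewrite cats0.
Qed.

Definition coset := {P : word X -> Prop | exists u, P = congr_mod u}.
Definition proj u : coset := exist _ (congr_mod u) (ex_intro _ u erefl).
Definition coset_repr (x : coset) : word X :=
  proj1_sig (constructive_indefinite_description _ (proj2_sig x)).

Lemma coset_eq (x y : coset) : proj1_sig x = proj1_sig y -> x = y.
Proof. by case: x y => [P hP] [Q hQ] /= ePQ; subst Q; rewrite (proof_irrelevance _ hP hQ). Qed.
Lemma proj_repr x : proj (coset_repr x) = x.
Proof.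
apply: coset_eq; rewrite /coset_repr /=.
by case: (constructive_indefinite_description _ _).
Qed.
Lemma proj_surj x : exists u, x = proj u.
Proof. by exists (coset_repr x); rewrite proj_repr. Qed.
Lemma proj_eq u v : proj u = proj v <-> congr_mod u v.
Proof.
split=> [/(congr1 (@proj1_sig _ _)) /= -> | h].
  by apply: congr_mod_feq; exact: feq_refl.
apply: coset_eq; apply: functional_extensionality => w; apply: propositional_extensionality.
by split; [exact: congr_mod_trans (congr_mod_sym h) | exact: congr_mod_trans h].
Qed.
Lemma congr_mod_repr u : congr_mod (coset_repr (proj u)) u.
Proof. by apply/proj_eq; rewrite proj_repr. Qed.

Definition qmul (x y : coset) := proj (coset_repr x ++ coset_repr y).
Definition qinv (x : coset) := proj (winv (coset_repr x)).

Lemma proj_cat u v : proj (u ++ v) = qmul (proj u) (proj v).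
Proof. by apply/proj_eq/congr_mod_sym/congr_mod_cat; exact: congr_mod_repr. Qed.
Lemma proj_winv u : proj (winv u) = qinv (proj u).
Proof. by apply/proj_eq/congr_mod_sym/congr_mod_inv; exact: congr_mod_repr. Qed.

Lemma qmulA x y z : qmul x (qmul y z) = qmul (qmul x y) z.
Proof.
have [u ->] := proj_surj x; have [v ->] := proj_surj y; have [w ->] := proj_surj z.
by rewrite -!proj_cat catA.
Qed.
Lemma qmul1 x : qmul (proj [::]) x = x.
Proof. by have [u ->] := proj_surj x; rewrite -proj_cat. Qed.
Lemma qmulV x : qmul (qinv x) x = proj [::].
Proof.
have [u ->] := proj_surj x; rewrite -proj_winv -proj_cat.
by apply/proj_eq/congr_mod_feq; exact: feq_invl.
Qed.

Definition quotient_group : group := Group qmulA qmul1 qmulV.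

Definition qproj u : quotient_group := proj u.

Lemma qprojM u v : qproj (u ++ v) = qproj u * qproj v.
Proof. exact: proj_cat. Qed.
Lemma qprojV u : qproj (winv u) = (qproj u)^-1.
Proof. exact: proj_winv. Qed.
Lemma qprojC u v : qproj (wcomm u v) = comm (qproj u) (qproj v).
Proof. by rewrite /wcomm /wmul !qprojM !qprojV. Qed.
Lemma qprojP u k : qproj (wpow u k) = pow (qproj u) k.
Proof. by elim: k => [|k IH] //; rewrite powS -IH -qprojM. Qed.
Lemma qproj1P u : qproj u = 1 <-> K u.
Proof.
rewrite /qproj proj_eq /congr_mod cats0.
by split=> /(normalV HK) //; rewrite winvK.
Qed.

End QuotientGroup.

(* The free group itself is the quotient by the freely trivial words; free
   equalities of words can therefore be checked by computing in a group. *)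
Definition freely_trivial (X : Type) (u : word X) : Prop := feq u [::].

Lemma freely_trivial_normal (X : Type) : normal_set (@freely_trivial X).
Proof.
split.
- exact: feq_refl.
- by move=> u v h1 h2; exact: feq_trans (feq_catr v h1) h2.
- by move=> u h; exact: feq_inv h.
- by move=> u v h1 h2; exact: feq_trans (feq_sym h1) h2.
- move=> u g h; apply: feq_trans (feq_invl g).
  exact: feq_catl (feq_catr g h).
Qed.

Lemma feq_qproj (X : Type) (u v : word X) :
  qproj (freely_trivial_normal X) u = qproj (freely_trivial_normal X) v -> feq u v.
Proof.
move/(proj_eq (freely_trivial_normal X)); rewrite /congr_mod /freely_trivial => h.
have e : feq u (u ++ (winv u ++ v)).
  by rewrite -{1}[u]cats0; exact: feq_sym (feq_catl u h).
apply: feq_trans e _; by rewrite catA; exact: (feq_catr v (feq_invr u)).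
Qed.

Ltac free_group_calc := apply: feq_qproj;
  rewrite /wcomm /wmul ?winv_cat ?winvK ?qprojM ?qprojV; gsimpl.

Lemma ncl_conjg (X : Type) (S : word X -> Prop) u g :
  ncl S u -> ncl S (winv g ++ u ++ g).
Proof.
move=> h; elim: h g => {u} [|r h Sr|a b _ IHa _ IHb|a _ IH|a b hab _ IH] g.
- exact: ncl_feq (feq_sym (feq_invl g)) (ncl_one S).
- by have := ncl_conj (h ++ g) Sr; rewrite /wmul winv_cat -!catA.
- by apply: ncl_feq (ncl_mul (IHa g) (IHb g)); free_group_calc.
- by have := ncl_inv (IH g); rewrite !winv_cat winvK -catA.
- exact: ncl_feq (feq_catl _ (feq_catr _ hab)) (IH g).
Qed.

Lemma gsub_conjg (X : Type) (S : word X -> Prop) :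
  (forall u g, S u -> gsub S (winv g ++ u ++ g)) ->
  forall u g, gsub S u -> gsub S (winv g ++ u ++ g).
Proof.
move=> hS u g h; elim: h g => {u} [|a Sa|a b _ IHa _ IHb|a _ IH|a b hab _ IH] g.
- exact: gsub_feq (feq_sym (feq_invl g)) (gsub_one S).
- exact: hS.
- by apply: gsub_feq (gsub_mul (IHa g) (IHb g)); free_group_calc.
- by have := gsub_inv (IH g); rewrite !winv_cat winvK -catA.
- exact: gsub_feq (feq_catl _ (feq_catr _ hab)) (IH g).
Qed.

Lemma RF_normal (n m1 m2 : nat) : normal_set (RF n m1 m2).
Proof.
split.
- exact: gsub_one.
- by move=> u v; apply: gsub_mul.
- by move=> u; apply: gsub_inv.
- by move=> u v; apply: gsub_feq.
- apply: gsub_conjg => _ g [r [f [hr ->]]].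
  have hb : RF n m1 m2 (wcomm (winv g ++ r ++ g) (winv g ++ f ++ g)).
    apply: gsub_base; exists (winv g ++ r ++ g), (winv g ++ f ++ g).
    by split=> //; exact: (ncl_conjg g hr).
  by apply: gsub_feq hb; free_group_calc.
Qed.

Section Presentation.
Variables n m1 m2 : nat.
Local Notation pi := (qproj (RF_normal n m1 m2)).

Definition Rimage (x : quotient_group (RF_normal n m1 m2)) : Prop :=
  exists2 r, Rn n m1 m2 r & x = pi r.

(* [R, F] is the kernel of the projection, so [r, f] = 1 for r in R. *)
Lemma Rimage_central : central Rimage.
Proof.
split.
- by exists [::]; first exact: ncl_one.
- move=> _ _ [r1 h1 ->] [r2 h2 ->]; exists (wmul r1 r2); last by rewrite qprojM.
  exact: ncl_mul.
- move=> _ [r h ->]; exists (winv r); last by rewrite qprojV.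
  exact: ncl_inv.
- move=> _ y [r h ->]; have [f ->] := proj_surj y; apply: commute_comm1.
  rewrite -[proj _ f]/(pi f) -qprojC; apply/qproj1P/gsub_base.
  by exists r, f.
Qed.

Lemma Rel_Rimage w : Rel n m1 m2 w -> Rimage (pi w).
Proof.
by move=> h; exists w => //; have := ncl_conj [::] h; rewrite /wmul /= cats0.
Qed.

Lemma ord_dvdP g d : pow (pi g) d = 1 -> ord_dvd n m1 m2 g d.
Proof. by rewrite -qprojP => /qproj1P. Qed.

Local Notation S i a := (pi (s n i a)).

Lemma root_pair_S i : 0 < i < n -> root_pair Rimage m1 m2 (S i L1) (S i Lx).
Proof.
move=> /andP[h1 hin]; have h2 : i <= n - 1 by lia.
split.
- by rewrite -qprojC; apply: Rel_Rimage; right; right; left; exists i.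
- by rewrite -!qprojP -qprojV -qprojM; apply: Rel_Rimage; left; exists i.
- by rewrite -qprojP; apply: Rel_Rimage; right; left; exists i.
Qed.

Lemma distant_S i j a b : 1 <= i -> i < j - 1 -> j - 1 <= n - 2 ->
  Rimage (comm (S i a) (S j b)).
Proof.
by move=> h1 h2 h3; rewrite -qprojC; apply: Rel_Rimage; do 3 right; left; exists i, j, a, b.
Qed.

Lemma adjacent_pair_S i : 1 <= i -> i <= n - 2 ->
  adjacent_pair Rimage (S i L1) (S i Lx) (S i.+1 L1) (S i.+1 Lx).
Proof.
move=> h1 h2.
have rel a : Rel n m1 m2 (wmul (wcomm (winv (s n i a)) (winv (s n i.+1 Lx)))
                               (winv (wcomm (s n i Lx) (s n i.+1 L1)))).
  by do 4 right; exists i, a; split=> //; apply: Or41.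
have := Rel_Rimage (rel L1); have := Rel_Rimage (rel Lx).
rewrite !qprojM !qprojV !qprojC ?qprojV => hQB hQA.
split=> //; rewrite -!qprojC; apply: Rel_Rimage; do 4 right.
- by exists i, Lx; split=> //; apply: Or42.
- by exists i, Lx; split=> //; apply: Or43.
- by exists i, L1; split=> //; apply: Or42.
- by exists i, L1; split=> //; apply: Or43.
Qed.

Lemma triple_S i a b : 1 <= i -> i <= n - 3 ->
  Rimage (comm (comm (S i a) (S i.+1 L1)) (comm (S i.+1 b) (S i.+2 L1))).
Proof.
move=> h1 h2; rewrite -!qprojC; apply: Rel_Rimage; do 4 right.
exists i, a; split=> //; last by apply: Or44; split=> //; exists b.
by apply: leq_trans h2 (leq_sub2l _ _).
Qed.

End Presentation.

Close Scope group_scope.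

Theorem mainTheorem8 (n m1 m2 : nat) :
  3 <= n -> 0 < m1 -> 0 < m2 -> m1 %| m2 ->
  let s := s n in
  let od := ord_dvd n m1 m2 in
  (* (1) *)
  (forall i, 1 <= i -> i <= n - 1 -> od (wcomm (s i L1) (s i Lx)) m1) /\
  (* (2) *)
  (forall i j, 1 <= i -> i < j - 1 -> j - 1 <= n - 2 ->
     [/\ od (wcomm (s i L1) (s j L1)) m2,
         od (wmul (wcomm (s i Lx) (s j Lx)) (winv (wcomm (s i L1) (s j L1)))) m1,
         od (wmul (wcomm (s i Lx) (s j L1)) (winv (wcomm (s i Lx) (s j Lx)))) m1 &
         od (wmul (wcomm (s i L1) (s j Lx)) (winv (wcomm (s i Lx) (s j Lx)))) m1]) /\
  (* (3) *)
  (forall i, 1 <= i -> i <= n - 2 ->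
     od (wmul (wcomm (s i L1) (s i.+1 Lx)) (winv (wcomm (s i Lx) (s i.+1 L1)))) m1 /\
     od (wmul (wcomm (s i Lx) (s i.+1 Lx)) (winv (wcomm (s i Lx) (s i.+1 L1)))) m1) /\
  (* (4) *)
  (forall i, 1 <= i -> i <= n - 2 ->
     let c := wcomm (s i L1) (s i.+1 L1) in
     [/\ od (wcomm c (s i L1)) m2,
         od (wcomm c (wmul (s i.+1 L1) (winv (s i L1)))) (gcdn m2 'C(m2, 2)),
         od (wcomm c (wmul (s i Lx) (winv (s i L1)))) m1 &
         od (wcomm c (wmul (wmul (s i Lx) (winv (s i.+1 Lx)))
                           (winv (wmul (s i L1) (winv (s i.+1 L1))))))
            (gcdn m1 'C(m1, 2))]) /\
  (* (5) *)
  (forall i, 1 <= i -> i <= n - 3 ->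
     let d := wcomm (wcomm (s i L1) (s i.+1 L1)) (s i.+2 L1) in
     od (wcomm d (s i.+1 L1)) (gcdn 2 m2) /\
     od (wcomm d (wmul (s i.+1 Lx) (winv (s i.+1 L1)))) (gcdn 2 m1)).
Proof.
move=> _ _ _ hdvd; cbv zeta.
have HZ := Rimage_central n m1 m2.
have root i : 0 < i < n -> _ := root_pair_S m1 m2 (i := i).
split; [|split; [|split; [|split]]].
- move=> i h1 h2; apply: ord_dvdP; rewrite qprojC.
  exact: (root_comm_order HZ (root i ltac:(lia))).
- move=> i j h1 h2 h3; have far a b := distant_S m1 m2 a b h1 h2 h3.
  have [? ? ? ?] := distant_comm_orders HZ hdvd (root i ltac:(lia)) (root j ltac:(lia))
    (far L1 L1) (far L1 Lx) (far Lx L1) (far Lx Lx).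
  by split; apply: ord_dvdP; rewrite ?(qprojM _ (wcomm _ _)) ?qprojV !qprojC.
- move=> i h1 h2; have adj := adjacent_pair_S m1 m2 h1 h2.
  have rA := root i ltac:(lia); have rC := root i.+1 ltac:(lia).
  by split; apply: ord_dvdP; rewrite qprojM qprojV !qprojC;
    [exact: (commAD_order HZ rA rC adj) | exact: (commBD_order HZ rA rC adj)].
- move=> i h1 h2; have adj := adjacent_pair_S m1 m2 h1 h2.
  have rA := root i ltac:(lia); have rC := root i.+1 ltac:(lia).
  by split; apply: ord_dvdP; rewrite !qprojC ?(qprojM, qprojV);
    [exact: (cA_order HZ rA adj hdvd) | exact: (cCA_order HZ rA rC adj hdvd)
    | exact: (cBA_order HZ rA adj) | exact: (cBDAC_order HZ rA rC adj)].
- move=> i h1 h2; have rC := root i.+1 ltac:(lia).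
  have adjAC := adjacent_pair_S (n := n) m1 m2 (i := i) h1 ltac:(lia).
  have adjCE := adjacent_pair_S (n := n) m1 m2 (i := i.+1) isT ltac:(lia).
  have far a := @distant_S n m1 m2 i i.+2 a L1 h1 ltac:(lia) ltac:(lia).
  have hAB := root_comm (root i ltac:(lia)).
  split; apply: ord_dvdP; rewrite !qprojC ?(qprojM, qprojV).
  + exact: (dC_order HZ rC adjAC adjCE (far L1) (triple_S m1 m2 L1 L1 h1 h2) hdvd).
  + exact: (dDC_order HZ hAB rC adjAC adjCE (far L1) (far Lx)
             (triple_S m1 m2 L1 L1 h1 h2) (triple_S m1 m2 Lx L1 h1 h2)).
Qed.
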